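(* Let $\mathcal{L}_1=\langle c_1,G_1\rangle$ and $\mathcal{L}_2=\langle c_2,G_2\rangle$ be logical zonotopes in $\mathbb{B}^n$. Let $\tilde c_1=c_1\oplus\mathbf{1}$, $\tilde c_2=c_2\oplus\mathbf{1}$, and $$\tilde G=[\tilde c_1g_{2,1},\dots,\tilde c_1g_{2,\gamma_2},\tilde c_2g_{1,1},\dots,\tilde c_2g_{1,\gamma_1},g_{1,1}g_{2,1},\dots,g_{1,\gamma_1}g_{2,\gamma_2}]$$ (last block over all pairs $(i,j)$). Then the Minkowski OR satisfies $\{z_1\vee z_2: z_1\in\mathcal{L}_1,z_2\in\mathcal{L}_2\}\subseteq\langle \tilde c_1\tilde c_2\oplus\mathbf{1},\tilde G\rangle$, and the Minkowski NOR satisfies $\{\neg(z_1\vee z_2): z_1\in\mathcal{L}_1,z_2\in\mathcal{L}_2\}\subseteq\langle \tilde c_1\tilde c_2,\tilde G\rangle$.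
   Context: $\mathbb{B}=\{0,1\}$; $\mathbf{1}$ is the all-ones vector. For binary vectors, $\oplus$ denotes componentwise XOR, $\neg$ componentwise negation, $\vee$ componentwise OR, and juxtaposition $ab$ componentwise AND; for $g\in\mathbb{B}^n$, $\beta\in\mathbb{B}$, $g\beta$ is $g$ if $\beta=1$ and $0$ otherwise. A logical zonotope is $\langle c,G\rangle=\{x\in\mathbb{B}^n: x=c\oplus g_1\beta_1\oplus\cdots\oplus g_\gamma\beta_\gamma,\ \beta_i\in\{0,1\}\}$ for $c\in\mathbb{B}^n$, $G=[g_1,\dots,g_\gamma]\in\mathbb{B}^{n\times\gamma}$; $G_1=[g_{1,1},\dots,g_{1,\gamma_1}]$, $G_2=[g_{2,1},\dots,g_{2,\gamma_2}]$. *)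

From mathcomp Require Import all_boot.
Set Implicit Arguments. Unset Strict Implicit. Unset Printing Implicit Defensive.

Definition bvec (n : nat) := {ffun 'I_n -> bool}.

Definition bxor n (u v : bvec n) : bvec n := [ffun i => addb (u i) (v i)].
Definition band n (u v : bvec n) : bvec n := [ffun i => u i && v i].
Definition bor  n (u v : bvec n) : bvec n := [ffun i => u i || v i].
Definition bneg n (u : bvec n) : bvec n := [ffun i => ~~ u i].
Definition bones n : bvec n := [ffun _ => true].
Definition bzero n : bvec n := [ffun _ => false].

Definition bscale n (g : bvec n) (b : bool) : bvec n := if b then g else bzero n.

(* A generator matrix G = [g_1, ..., g_gamma] is the sequence of its columns. *)
Definition in_lz n (x c : bvec n) (G : seq (bvec n)) : Prop :=
  exists bs : seq bool, size bs = size G /\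
    x = foldr (fun p acc => bxor (bscale p.1 p.2) acc) c (zip G bs).

Definition Gtilde n (c1 c2 : bvec n) (G1 G2 : seq (bvec n)) : seq (bvec n) :=
  let c1t := bxor c1 (bones n) in
  let c2t := bxor c2 (bones n) in
  [seq band c1t g | g <- G2] ++ [seq band c2t g | g <- G1]
  ++ [seq band g1 g2 | g1 <- G1, g2 <- G2].

From mathcomp Require Import all_boot.

(* Write z1 = c1 (+) s1 and z2 = c2 (+) s2 with s_i the generator parts.  By De Morgan,
   NOR(z1, z2) = (~ z1)(~ z2) = (c1t (+) s1)(c2t (+) s2)
               = c1t c2t (+) c1t s2 (+) c2t s1 (+) s1 s2,
   and AND distributes over XOR, so the last three terms are XOR-combinations of the columns of
   G~, with coefficients b2, b1 and the pairwise products b1_i b2_j.  OR is NOR (+) 1, which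
   only shifts the center. *)

Section LinearCombination.

Variable n : nat.
Implicit Types (c v x : bvec n) (G : seq (bvec n)) (bs : seq bool).

Definition lin_comb G bs : bvec n :=
  foldr (fun p acc => bxor (bscale p.1 p.2) acc) (bzero n) (zip G bs).

Lemma lz_point_lin_comb c G bs :
  foldr (fun p acc => bxor (bscale p.1 p.2) acc) c (zip G bs) = bxor c (lin_comb G bs).
Proof.
elim: G bs => [|g G IH] [|b bs] /=; apply/ffunP=> k; rewrite !ffunE ?addbF //.
by rewrite IH /lin_comb !ffunE addbCA.
Qed.

Lemma in_lzP x c G :
  in_lz x c G <-> exists2 bs, size bs = size G & x = bxor c (lin_comb G bs).
Proof.
rewrite /in_lz; split=> [[bs [Hs ->]]|[bs Hs ->]]; exists bs;
  by rewrite ?lz_point_lin_comb.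
Qed.

Lemma in_lz_shift x c d G : in_lz x c G -> in_lz (bxor x d) (bxor c d) G.
Proof.
case/in_lzP=> bs Hs ->; apply/in_lzP; exists bs => //.
by apply/ffunP=> k; rewrite !ffunE addbAC.
Qed.

Lemma lin_comb_nill bs : lin_comb [::] bs = bzero n.
Proof. by case: bs. Qed.

Lemma lin_comb_nilr G : lin_comb G [::] = bzero n.
Proof. by case: G. Qed.

Lemma lin_comb_cons g G b bs :
  lin_comb (g :: G) (b :: bs) = bxor (bscale g b) (lin_comb G bs).
Proof. by []. Qed.

Lemma lin_comb_cat G1 G2 bs1 bs2 : size bs1 = size G1 ->
  lin_comb (G1 ++ G2) (bs1 ++ bs2) = bxor (lin_comb G1 bs1) (lin_comb G2 bs2).
Proof.
elim: G1 bs1 => [|g G IH] [|b bs] // Hs.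
  by apply/ffunP=> k; rewrite lin_comb_nill !ffunE.
rewrite !cat_cons !lin_comb_cons IH; last by case: Hs.
by apply/ffunP=> k; rewrite !ffunE addbA.
Qed.

Lemma lin_comb_band v G bs :
  lin_comb [seq band v g | g <- G] bs = band v (lin_comb G bs).
Proof.
elim: G bs => [|g G IH] [|b bs] /=;
  try by apply/ffunP=> k; rewrite /lin_comb /= !ffunE andbF.
rewrite !lin_comb_cons IH; apply/ffunP=> k; rewrite !ffunE.
by case: b; rewrite /= !ffunE ?andbF ?andb_addr.
Qed.

Lemma lin_comb_scale_coef v b G bs :
  lin_comb [seq band v g | g <- G] [seq b && b' | b' <- bs]
  = bscale (band v (lin_comb G bs)) b.
Proof.
case: b; first by rewrite map_id lin_comb_band.
elim: G bs => [|g G IH] [|b' bs] //=.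
by rewrite lin_comb_cons IH; apply/ffunP=> k; rewrite !ffunE.
Qed.

Lemma lin_comb_allpairs G1 G2 bs1 bs2 : size bs2 = size G2 ->
  lin_comb [seq band g1 g2 | g1 <- G1, g2 <- G2] [seq b1 && b2 | b1 <- bs1, b2 <- bs2]
  = band (lin_comb G1 bs1) (lin_comb G2 bs2).
Proof.
move=> Hs2; elim: G1 bs1 => [|g G IH] [|b bs] /=;
  try by apply/ffunP=> k; rewrite ?lin_comb_nill ?lin_comb_nilr !ffunE.
rewrite lin_comb_cat ?size_map // lin_comb_scale_coef IH lin_comb_cons.
by apply/ffunP=> k; rewrite !ffunE; case: b; rewrite /= !ffunE ?andb_addl.
Qed.

End LinearCombination.

Lemma nor_xor_expansion n (c1 c2 s1 s2 : bvec n) :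
  let c1t := bxor c1 (bones n) in
  let c2t := bxor c2 (bones n) in
  bneg (bor (bxor c1 s1) (bxor c2 s2))
  = bxor (band c1t c2t) (bxor (band c1t s2) (bxor (band c2t s1) (band s1 s2))).
Proof.
apply/ffunP=> k; rewrite !ffunE.
by case: (c1 k); case: (c2 k); case: (s1 k); case: (s2 k).
Qed.

Lemma minkowski_nor_subset n (c1 c2 z1 z2 : bvec n) (G1 G2 : seq (bvec n)) :
  in_lz z1 c1 G1 -> in_lz z2 c2 G2 ->
  in_lz (bneg (bor z1 z2)) (band (bxor c1 (bones n)) (bxor c2 (bones n)))
        (Gtilde c1 c2 G1 G2).
Proof.
case/in_lzP=> bs1 Hs1 ->; case/in_lzP=> bs2 Hs2 ->; apply/in_lzP.
exists (bs2 ++ bs1 ++ [seq b1 && b2 | b1 <- bs1, b2 <- bs2]).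
  by rewrite /Gtilde !size_cat !size_map !size_allpairs Hs1 Hs2.
rewrite nor_xor_expansion /Gtilde.
by rewrite !lin_comb_cat ?size_map // !lin_comb_band lin_comb_allpairs.
Qed.

Theorem mainTheorem5 (n : nat) (c1 c2 : bvec n) (G1 G2 : seq (bvec n)) :
  let c1t := bxor c1 (bones n) in
  let c2t := bxor c2 (bones n) in
  (forall z1 z2 : bvec n, in_lz z1 c1 G1 -> in_lz z2 c2 G2 ->
     in_lz (bor z1 z2) (bxor (band c1t c2t) (bones n)) (Gtilde c1 c2 G1 G2)) /\
  (forall z1 z2 : bvec n, in_lz z1 c1 G1 -> in_lz z2 c2 G2 ->
     in_lz (bneg (bor z1 z2)) (band c1t c2t) (Gtilde c1 c2 G1 G2)).
Proof.
move=> c1t c2t; split=> z1 z2 Hz1 Hz2; last exact: minkowski_nor_subset.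
have -> : bor z1 z2 = bxor (bneg (bor z1 z2)) (bones n).
  by apply/ffunP=> k; rewrite !ffunE addbT negbK.
exact/in_lz_shift/minkowski_nor_subset.
Qed.
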